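(* Let $X$ be a Tychonoff space. Then $C_k(X)$ is $\aleph_0$-bounded if and only if every compact subset of $X$ is metrizable.
   Context: $C(X)$ is the set of continuous real-valued functions on $X$, a topological group under pointwise addition. $C_k(X)$ is $C(X)$ with the compact-open topology, whose basic neighborhoods of $f$ are $\{g:|g(x)-f(x)|<\varepsilon\ \forall x\in K\}$, $K\subset X$ compact, $\varepsilon>0$. A topological group $G$ with identity $e$ is $\aleph_0$-bounded if for each neighborhood $U$ of $e$ there is a countable $A\subset G$ with $G=A\cdot U$. *)

From Stdlib Require Import Reals List.
Open Scope R_scope.

Record TopSpace := {
  carrier :> Type;
  is_open : (carrier -> Prop) -> Prop;
  open_full : is_open (fun _ => True);
  open_inter : forall U V, is_open U -> is_open V ->
                 is_open (fun x => U x /\ V x);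
  open_union : forall S : (carrier -> Prop) -> Prop,
                 (forall U, S U -> is_open U) ->
                 is_open (fun x => exists U, S U /\ U x)
}.

Definition is_closed (X : TopSpace) (F : X -> Prop) : Prop :=
  is_open X (fun x => ~ F x).

Definition R_open (V : R -> Prop) : Prop :=
  forall y, V y -> exists r, 0 < r /\ forall z, Rabs (z - y) < r -> V z.

Definition cont_real (X : TopSpace) (f : X -> R) : Prop :=
  forall V, R_open V -> is_open X (fun x => V (f x)).

Definition compact_set (X : TopSpace) (K : X -> Prop) : Prop :=
  forall S : (X -> Prop) -> Prop,
    (forall U, S U -> is_open X U) ->
    (forall x, K x -> exists U, S U /\ U x) ->
    exists l : list (X -> Prop),
      (forall U, In U l -> S U) /\
      (forall x, K x -> exists U, In U l /\ U x).

Definition tychonoff (X : TopSpace) : Prop :=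
  (forall x : X, is_closed X (fun y => y = x)) /\
  (forall (F : X -> Prop) (x : X), is_closed X F -> ~ F x ->
     exists f : X -> R, cont_real X f /\
       (forall y, 0 <= f y <= 1) /\ f x = 0 /\ (forall y, F y -> f y = 1)).

(* The subspace K of X is metrizable: there is a metric d on K whose
   metric topology coincides with the subspace topology on K. *)
Definition metrizable_subspace (X : TopSpace) (K : X -> Prop) : Prop :=
  exists d : X -> X -> R,
    (forall x y, K x -> K y -> 0 <= d x y) /\
    (forall x y, K x -> K y -> (d x y = 0 <-> x = y)) /\
    (forall x y, K x -> K y -> d x y = d y x) /\
    (forall x y z, K x -> K y -> K z -> d x z <= d x y + d y z) /\
    (forall A : X -> Prop, (forall x, A x -> K x) ->
       ((exists U, is_open X U /\ forall x, K x -> (A x <-> U x)) <->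
        (forall x, A x -> exists r, 0 < r /\
           forall y, K y -> d x y < r -> A y))).

Definition ck_open (X : TopSpace) (W : (X -> R) -> Prop) : Prop :=
  forall f, cont_real X f -> W f ->
    exists (K : X -> Prop) (eps : R), compact_set X K /\ 0 < eps /\
      forall g, cont_real X g ->
        (forall x, K x -> Rabs (g x - f x) < eps) -> W g.

Definition ck_nbhd0 (X : TopSpace) (U : (X -> R) -> Prop) : Prop :=
  exists W, ck_open X W /\ W (fun _ => 0) /\
    (forall g, cont_real X g -> W g -> U g).

Definition countable_set {A : Type} (S : A -> Prop) : Prop :=
  exists s : nat -> A, forall a, S a -> exists n, s n = a.

Definition aleph0_bounded_Ck (X : TopSpace) : Prop :=
  forall U : (X -> R) -> Prop, ck_nbhd0 X U ->
    exists A : (X -> R) -> Prop,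
      countable_set A /\ (forall a, A a -> cont_real X a) /\
      forall f, cont_real X f ->
        exists a u, A a /\ U u /\ cont_real X u /\
          f = (fun x => a x + u x).

(* Both sides are equivalent to: for every compact K, C(X) is separable for the
   seminorm sup_K |f|.  For aleph_0-boundedness this is just a matter of testing it
   on the neighbourhoods {g : sup_K |g| < eps}.

   If C(X) is sup_K-separable, a countable family h_j that is 1/2-dense separates
   the points of K (X is Tychonoff), so d(x,y) = sum_j 2^-j min(1, |h_j x - h_j y|)
   is a metric on K.  Its topology is coarser than that of K because the h_j are
   continuous, and hence equal to it because K is compact.

   Conversely a compact metric K has a countable base.  Up to eps on K, a continuous
   function is described by finitely many basic sets covering K, each tagged with an
   integer multiple of eps/4 close to the function there; these descriptions form a
   countable set, and one continuous function per description is eps-dense. *)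

From Coquelicot Require Import Coquelicot.
From Stdlib Require Import Reals List Lra Lia Cantor.
From Stdlib Require Import FunctionalExtensionality PropExtensionality ClassicalEpsilon Classical.
Open Scope R_scope.

Lemma open_of_locally_open (X : TopSpace) (P : X -> Prop) :
  (forall x, P x -> exists W, is_open X W /\ W x /\ forall z, W z -> P z) -> is_open X P.
Proof.
  intros H.
  replace P with (fun x => exists W, (is_open X W /\ forall z, W z -> P z) /\ W x).
  - apply open_union. now intros U [HU _].
  - apply functional_extensionality; intros x; apply propositional_extensionality; split.
    + intros [W [[_ HWP] Wx]]. auto.
    + intros Px. destruct (H x Px) as [W [HW [Wx HWP]]]. eauto.
Qed.

Lemma open_empty (X : TopSpace) : is_open X (fun _ => False).
Proof. apply open_of_locally_open. tauto. Qed.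

Lemma open_abs_sub_lt (X : TopSpace) (f : X -> R) (c r : R) :
  cont_real X f -> is_open X (fun z => Rabs (f z - c) < r).
Proof.
  intros Hf. apply (Hf (fun y => Rabs (y - c) < r)). intros y Hy.
  exists (r - Rabs (y - c)); split; [lra|]. intros z Hz.
  replace (z - c) with ((z - y) + (y - c)) by ring.
  eapply Rle_lt_trans; [apply Rabs_triang|lra].
Qed.

Lemma cont_real_of_local (X : TopSpace) (f : X -> R) :
  (forall x r, 0 < r ->
     exists W, is_open X W /\ W x /\ forall z, W z -> Rabs (f z - f x) < r) ->
  cont_real X f.
Proof.
  intros H V HV. apply open_of_locally_open. intros x Vx.
  destruct (HV _ Vx) as [r [r0 Hr]]. destruct (H x r r0) as [W [HW [Wx HWr]]].
  exists W; auto.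
Qed.

Lemma cont_real_const (X : TopSpace) (c : R) : cont_real X (fun _ => c).
Proof.
  apply cont_real_of_local. intros x r r0. exists (fun _ => True).
  split; [apply open_full|]. split; [easy|]. intros _. rewrite Rminus_diag, Rabs_R0. lra.
Qed.

Lemma Rabs_sub_le (a b : R) : Rabs (a - b) <= Rabs a + Rabs b.
Proof. rewrite <- (Rabs_Ropp b). apply Rabs_triang. Qed.

Lemma cont_real_sub (X : TopSpace) (f g : X -> R) :
  cont_real X f -> cont_real X g -> cont_real X (fun x => f x - g x).
Proof.
  intros Hf Hg. apply cont_real_of_local. intros x r r0.
  exists (fun z => Rabs (f z - f x) < r / 2 /\ Rabs (g z - g x) < r / 2).
  split; [apply open_inter; apply open_abs_sub_lt; auto|].
  split; [rewrite !Rminus_diag, Rabs_R0; lra|].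
  intros z [H1 H2].
  replace (f z - g z - (f x - g x)) with ((f z - f x) - (g z - g x)) by ring.
  eapply Rle_lt_trans; [apply Rabs_sub_le|lra].
Qed.

Lemma compact_finite_witnesses (X : TopSpace) (K : X -> Prop) {W : Type}
  (P : W -> Prop) (Q : W -> X -> Prop) :
  compact_set X K ->
  (forall x, K x -> exists w O, P w /\ is_open X O /\ O x /\ forall y, O y -> Q w y) ->
  exists ws : list W, (forall w, In w ws -> P w) /\
    forall y, K y -> exists w, In w ws /\ Q w y.
Proof.
  intros HK Hloc.
  set (S := fun O => is_open X O /\ exists w, P w /\ forall y, O y -> Q w y).
  destruct (HK S) as [l [Hl Hcov]].
  - now intros O [HO _].
  - intros x Kx. destruct (Hloc x Kx) as [w [O [Pw [HO [Ox HOQ]]]]].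
    exists O. split; [split; [|exists w]|]; auto.
  - enough (Hfin : exists ws, (forall w, In w ws -> P w) /\
              forall y, (exists O, In O l /\ O y) -> exists w, In w ws /\ Q w y).
    { destruct Hfin as [ws [HP HQ]]. exists ws. split; auto. }
    clear Hcov. induction l as [|O l IH].
    + exists nil. split; [easy|]. now intros y [O [[] _]].
    + destruct IH as [ws [HP HQ]]; [intros; apply Hl; now right|].
      destruct (Hl O (or_introl eq_refl)) as [_ [w [Pw HOQ]]].
      exists (w :: ws). split; [intros w' [<-|]; auto|].
      intros y [O' [[<-|HO'] O'y]].
      * exists w. split; [now left|auto].
      * destruct (HQ y (ex_intro _ O' (conj HO' O'y))) as [w' [Hw' Qw']].
        exists w'. split; [now right|auto].
Qed.

Definition enumerable (T : Type) : Prop :=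
  exists e : nat -> T, forall t, exists n, e n = t.

Lemma enumerable_nat : enumerable nat.
Proof. exists (fun n => n). eauto. Qed.

Lemma enumerable_prod (A B : Type) : enumerable A -> enumerable B -> enumerable (A * B).
Proof.
  intros [ea Ha] [eb Hb]. exists (fun n => let (i, j) := of_nat n in (ea i, eb j)).
  intros [a b]. destruct (Ha a) as [i <-], (Hb b) as [j <-].
  exists (to_nat (i, j)). now rewrite cancel_of_to.
Qed.

Lemma enumerable_image (A B : Type) (f : A -> B) :
  (forall b, exists a, f a = b) -> enumerable A -> enumerable B.
Proof.
  intros Hf [e He]. exists (fun n => f (e n)). intros b.
  destruct (Hf b) as [a <-]. destruct (He a) as [n <-]. eauto.
Qed.

Lemma enumerable_Z : enumerable Z.
Proof.
  apply (enumerable_image (nat * nat) Z (fun p => (Z.of_nat (fst p) - Z.of_nat (snd p))%Z)).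
  - intros z. exists (Z.to_nat z, Z.to_nat (- z)). simpl. lia.
  - apply enumerable_prod; apply enumerable_nat.
Qed.

Fixpoint list_of_code {A : Type} (e : nat -> A) (len m : nat) : list A :=
  match len with
  | O => nil
  | S len' => let (a, m') := of_nat m in e a :: list_of_code e len' m'
  end.

Lemma enumerable_list (A : Type) : enumerable A -> enumerable (list A).
Proof.
  intros [e He].
  apply (enumerable_image (nat * nat) (list A) (fun p => list_of_code e (fst p) (snd p)));
    [|apply enumerable_prod; apply enumerable_nat].
  intros l. induction l as [|a l [[len m] IH]].
  - now exists (O, O).
  - destruct (He a) as [i <-]. exists (S len, to_nat (i, m)).
    cbn [list_of_code fst snd] in *. now rewrite cancel_of_to, IH.
Qed.

Lemma pow_half_pos (n : nat) : 0 < (/2) ^ n.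
Proof. apply pow_lt; lra. Qed.

Lemma pow_half_le_1 (n : nat) : (/2) ^ n <= 1.
Proof. induction n; simpl; [lra|]. pose proof (pow_half_pos n). nra. Qed.

Lemma is_series_pow_half : is_series (fun n => (/2) ^ n) 2.
Proof.
  assert (Hq : Rabs (/2) < 1) by (rewrite Rabs_pos_eq; lra).
  generalize (is_series_geom (/2) Hq). now replace (/ (1 - /2)) with 2 by field.
Qed.

Section HalfDominated.

Variables (a : nat -> R) (C : R).
Hypothesis a_bounds : forall n, 0 <= a n <= C * (/2) ^ n.

Lemma ex_series_half_dominated : ex_series a.
Proof.
  apply (ex_series_le a (fun n => C * (/2) ^ n)).
  - intros n. change (norm (a n)) with (Rabs (a n)). rewrite Rabs_pos_eq; apply a_bounds.
  - exact (ex_series_scal_l C _ (ex_intro _ _ is_series_pow_half)).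
Qed.

Lemma Series_half_dominated_le : Series a <= C * 2.
Proof.
  replace (C * 2) with (Series (fun n => C * (/2) ^ n)).
  - apply Series_le; [apply a_bounds|].
    exact (ex_series_scal_l C _ (ex_intro _ _ is_series_pow_half)).
  - rewrite Series_scal_l. f_equal. apply is_series_unique, is_series_pow_half.
Qed.

Lemma Series_half_dominated_ge_term (j : nat) : a j <= Series a.
Proof.
  assert (tail_nonneg : 0 <= Series (fun k => a (S j + k)%nat)).
  { replace 0 with (Series (fun _ : nat => 0 * 0)) by (rewrite Series_scal_l; ring).
    apply Series_le.
    - intros k. split; [lra|]. rewrite Rmult_0_l. apply a_bounds.
    - apply (ex_series_incr_n a (S j)), ex_series_half_dominated. }
  rewrite (Series_incr_n a (S j)); [|lia|apply ex_series_half_dominated].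
  simpl Nat.pred. destruct j as [|j].
  - change (sum_f_R0 a 0) with (a 0%nat). lra.
  - rewrite tech5. pose proof (cond_pos_sum a j (fun n => proj1 (a_bounds n))). lra.
Qed.

End HalfDominated.

Definition weighted_gap {T : Type} (h : nat -> T -> R) (x y : T) (j : nat) : R :=
  (/2) ^ j * Rmin 1 (Rabs (h j x - h j y)).

Definition family_dist {T : Type} (h : nat -> T -> R) (x y : T) : R :=
  Series (weighted_gap h x y).

Lemma Rmin_1_bounds (v : R) : 0 <= v -> 0 <= Rmin 1 v <= 1 /\ Rmin 1 v <= v.
Proof. intros. unfold Rmin; destruct (Rle_dec 1 v); lra. Qed.

Lemma Rmin_1_triangle (a b c : R) :
  Rmin 1 (Rabs (a - c)) <= Rmin 1 (Rabs (a - b)) + Rmin 1 (Rabs (b - c)).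
Proof.
  pose proof (Rabs_pos (a - b)). pose proof (Rabs_pos (b - c)).
  assert (Rabs (a - c) <= Rabs (a - b) + Rabs (b - c)).
  { replace (a - c) with ((a - b) + (b - c)) by ring. apply Rabs_triang. }
  unfold Rmin. repeat destruct Rle_dec; lra.
Qed.

Section FamilyDist.

Variables (T : Type) (h : nat -> T -> R).

Lemma weighted_gap_bounds (x y : T) (j : nat) : 0 <= weighted_gap h x y j <= 1 * (/2) ^ j.
Proof.
  unfold weighted_gap. pose proof (pow_half_pos j).
  destruct (Rmin_1_bounds (Rabs (h j x - h j y)) (Rabs_pos _)). nra.
Qed.

Lemma weighted_gap_le_family_dist (x y : T) (j : nat) :
  weighted_gap h x y j <= family_dist h x y.
Proof. apply (Series_half_dominated_ge_term _ 1), weighted_gap_bounds. Qed.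

Lemma family_dist_nonneg (x y : T) : 0 <= family_dist h x y.
Proof.
  eapply Rle_trans; [apply (weighted_gap_bounds x y 0)|apply weighted_gap_le_family_dist].
Qed.

Lemma family_dist_self (x : T) : family_dist h x x = 0.
Proof.
  unfold family_dist. replace 0 with (Series (fun _ : nat => 0 * 0)) by (rewrite Series_scal_l; ring).
  apply Series_ext. intros j. unfold weighted_gap.
  rewrite Rminus_diag, Rabs_R0, Rmin_right; lra.
Qed.

Lemma family_dist_sym (x y : T) : family_dist h x y = family_dist h y x.
Proof.
  unfold family_dist. apply Series_ext. intros j. unfold weighted_gap.
  now rewrite Rabs_minus_sym.
Qed.

Lemma family_dist_triangle (x y z : T) :
  family_dist h x z <= family_dist h x y + family_dist h y z.
Proof.
  unfold family_dist. rewrite <- Series_plus;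
    try (apply (ex_series_half_dominated _ 1); intros; apply weighted_gap_bounds).
  apply Series_le.
  - intros j. split; [apply weighted_gap_bounds|]. unfold weighted_gap.
    rewrite <- Rmult_plus_distr_l. apply Rmult_le_compat_l; [left; apply pow_half_pos|].
    apply Rmin_1_triangle.
  - apply (ex_series_half_dominated _ 2). intros j.
    pose proof (weighted_gap_bounds x y j). pose proof (weighted_gap_bounds y z j). lra.
Qed.

Lemma family_dist_pos (x y : T) (j : nat) : h j x <> h j y -> 0 < family_dist h x y.
Proof.
  intros Hne. eapply Rlt_le_trans; [|apply (weighted_gap_le_family_dist x y j)].
  apply Rmult_lt_0_compat; [apply pow_half_pos|]. apply Rmin_pos; [lra|].
  apply Rabs_pos_lt. lra.
Qed.

Lemma family_dist_le_head_tail (x z : T) (M : nat) (rho : R) :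
  (forall j, (j < M)%nat -> Rabs (h j x - h j z) <= rho) ->
  family_dist h x z <= INR M * rho + 2 * (/2) ^ M.
Proof.
  intros Hhead.
  assert (tail : forall M', Series (fun k => weighted_gap h x z (M' + k)) <= 2 * (/2) ^ M').
  { intros M'. rewrite Rmult_comm. apply Series_half_dominated_le. intros k.
    rewrite <- pow_add. pose proof (weighted_gap_bounds x z (M' + k)). lra. }
  destruct M as [|N].
  - simpl. replace (0 * rho + 2 * 1) with (1 * 2) by ring.
    apply Series_half_dominated_le, weighted_gap_bounds.
  - unfold family_dist.
    rewrite (Series_incr_n _ (S N)); [|lia|apply (ex_series_half_dominated _ 1), weighted_gap_bounds].
    assert (head : sum_f_R0 (weighted_gap h x z) N <= INR (S N) * rho).
    { rewrite Rmult_comm, <- sum_cte. apply sum_Rle. intros j Hj. unfold weighted_gap.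
      pose proof (Hhead j ltac:(lia)). pose proof (pow_half_le_1 j). pose proof (pow_half_pos j).
      destruct (Rmin_1_bounds (Rabs (h j x - h j z)) (Rabs_pos _)). nra. }
    pose proof (tail (S N)). simpl Nat.pred. lra.
Qed.

End FamilyDist.

Section FamilyDistTopology.

Variables (X : TopSpace) (h : nat -> X -> R).
Hypothesis h_cont : forall j, cont_real X (h j).

Lemma open_near_first_functions (x : X) (M : nat) (rho : R) : 0 < rho ->
  exists V, is_open X V /\ V x /\
    forall z, V z -> forall j, (j < M)%nat -> Rabs (h j x - h j z) <= rho.
Proof.
  intros rho0. induction M as [|M [V [HV [Vx HVz]]]].
  - exists (fun _ => True). split; [apply open_full|]. split; [easy|]. intros; lia.
  - exists (fun z => V z /\ Rabs (h M z - h M x) < rho). split.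
    + apply open_inter; [easy|]. now apply open_abs_sub_lt.
    + split; [split; [easy|rewrite Rminus_diag, Rabs_R0; lra]|].
      intros z [Vz Hz] j Hj. destruct (Nat.eq_dec j M) as [->|].
      * rewrite Rabs_minus_sym. lra.
      * apply HVz; [easy|lia].
Qed.

Lemma family_dist_small_near (x : X) (r : R) : 0 < r ->
  exists V, is_open X V /\ V x /\ forall z, V z -> family_dist h x z < r.
Proof.
  intros r0.
  destruct (pow_lt_1_zero (/2) ltac:(rewrite Rabs_pos_eq; lra) (r / 4)) as [M HM]; [lra|].
  specialize (HM M (le_n M)). rewrite Rabs_pos_eq in HM by (left; apply pow_half_pos).
  set (rho := r / (2 * (INR M + 1))).
  pose proof (pos_INR M).
  assert (rho0 : 0 < rho) by (unfold rho; apply Rdiv_lt_0_compat; lra).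
  assert (head : INR M * rho < r / 2).
  { unfold rho. apply (Rmult_lt_reg_r (2 * (INR M + 1))); [lra|]. field_simplify; nra. }
  destruct (open_near_first_functions x M rho rho0) as [V [HV [Vx HVz]]].
  exists V. split; [easy|]. split; [easy|]. intros z Vz.
  pose proof (family_dist_le_head_tail X h x z M rho (HVz z Vz)). lra.
Qed.

Lemma family_dist_bounded_below_near (x z : X) (j : nat) : h j x <> h j z ->
  exists V d0, is_open X V /\ V z /\ 0 < d0 /\ forall w, V w -> d0 <= family_dist h x w.
Proof.
  intros Hne. set (tau := Rabs (h j x - h j z)).
  assert (tau0 : 0 < tau) by (apply Rabs_pos_lt; lra).
  exists (fun w => Rabs (h j w - h j z) < tau / 2), ((/2) ^ j * Rmin 1 (tau / 2)).
  split; [now apply open_abs_sub_lt|]. split; [rewrite Rminus_diag, Rabs_R0; lra|].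
  split; [apply Rmult_lt_0_compat; [apply pow_half_pos|apply Rmin_pos; lra]|].
  intros w Hw. eapply Rle_trans; [|apply (weighted_gap_le_family_dist X h x w j)].
  apply Rmult_le_compat_l; [left; apply pow_half_pos|].
  assert (tau / 2 <= Rabs (h j x - h j w)).
  { unfold tau in *.
    pose proof (Rabs_triang (h j x - h j w) (h j w - h j z)).
    replace (h j x - h j w + (h j w - h j z)) with (h j x - h j z) in * by ring. lra. }
  unfold Rmin. repeat destruct Rle_dec; lra.
Qed.

End FamilyDistTopology.

Lemma list_pos_lower_bound (l : list R) :
  (forall r, In r l -> 0 < r) -> exists r0, 0 < r0 /\ forall r, In r l -> r0 <= r.
Proof.
  induction l as [|r l IH]; intros Hpos.
  - exists 1. split; [lra|easy].
  - destruct IH as [r0 [r00 Hr0]]; [intros; apply Hpos; now right|].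
    exists (Rmin r r0). split; [apply Rmin_pos; auto using in_eq|].
    intros r' [<-|Hin]; [apply Rmin_l|]. eapply Rle_trans; [apply Rmin_r|auto].
Qed.

Section SeparatingFamily.

Variables (X : TopSpace) (K : X -> Prop) (h : nat -> X -> R).
Hypothesis K_compact : compact_set X K.
Hypothesis h_cont : forall j, cont_real X (h j).
Hypothesis h_separates : forall x y, K x -> K y -> x <> y -> exists j, h j x <> h j y.

Lemma family_dist_ball_in_relatively_open (U : X -> Prop) (A : X -> Prop) (x : X) :
  is_open X U -> (forall y, K y -> (A y <-> U y)) -> K x -> A x ->
  exists r, 0 < r /\ forall y, K y -> family_dist h x y < r -> A y.
Proof.
  intros HU HUA Kx Ax.
  destruct (compact_finite_witnesses X K (fun r => 0 < r)
              (fun r y => K y -> family_dist h x y < r -> A y) K_compact)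
    as [rs [Hpos Hrs]].
  - intros z Kz. destruct (classic (U z)) as [Uz|nUz].
    + exists 1, U. repeat split; [lra|easy|easy|]. intros y Uy Ky _. now apply HUA.
    + assert (Hxz : x <> z) by (intros <-; apply nUz, HUA; auto).
      destruct (h_separates x z Kx Kz Hxz) as [j Hj].
      destruct (family_dist_bounded_below_near X h h_cont x z j Hj)
        as [V [d0 [HV [Vz [d00 Hd0]]]]].
      exists d0, V. repeat split; auto. intros y Vy _ Hy. specialize (Hd0 y Vy). lra.
  - destruct (list_pos_lower_bound rs Hpos) as [r0 [r00 Hr0]].
    exists r0. split; [easy|]. intros y Ky Hy.
    destruct (Hrs y Ky) as [r [Hr HQ]]. apply HQ; [easy|]. specialize (Hr0 r Hr). lra.
Qed.

Lemma metrizable_of_separating_family : metrizable_subspace X K.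
Proof.
  exists (family_dist h).
  split; [intros; apply family_dist_nonneg|].
  split.
  { intros x y Kx Ky. split; [|intros ->; apply family_dist_self].
    intros H0. apply NNPP. intros Hne. destruct (h_separates x y Kx Ky Hne) as [j Hj].
    pose proof (family_dist_pos X h x y j Hj). lra. }
  split; [intros; apply family_dist_sym|].
  split; [intros; apply family_dist_triangle|].
  intros A HA. split.
  - intros [U [HU HUA]] x Ax. exact (family_dist_ball_in_relatively_open U A x HU HUA (HA x Ax) Ax).
  - intros Hball.
    exists (fun z => exists V, (is_open X V /\ forall w, V w -> K w -> A w) /\ V z).
    split; [apply open_union; now intros V [HV _]|].
    intros x Kx. split.
    + intros Ax. destruct (Hball x Ax) as [r [r0 Hr]].
      destruct (family_dist_small_near X h h_cont x r r0) as [V [HV [Vx HVd]]].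
      exists V. split; [split; [easy|]|easy]. intros w Vw Kw. apply Hr; auto.
    + intros [V [[_ HV] Vx]]. auto.
Qed.

End SeparatingFamily.

Definition subspace_base (X : TopSpace) (K : X -> Prop) {I : Type} (B : I -> X -> Prop) : Prop :=
  (forall i, exists O, is_open X O /\ forall y, K y -> (O y <-> B i y)) /\
  (forall O x, is_open X O -> K x -> O x ->
     exists i, B i x /\ forall y, K y -> B i y -> O y).

Section MetricSubspace.

Variables (X : TopSpace) (K : X -> Prop) (d : X -> X -> R).
Hypothesis K_compact : compact_set X K.
Hypothesis d_self : forall x, K x -> d x x = 0.
Hypothesis d_sym : forall x y, K x -> K y -> d x y = d y x.
Hypothesis d_triangle : forall x y z, K x -> K y -> K z -> d x z <= d x y + d y z.
Hypothesis d_topology : forall A : X -> Prop, (forall x, A x -> K x) ->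
  ((exists U, is_open X U /\ forall x, K x -> (A x <-> U x)) <->
   (forall x, A x -> exists r, 0 < r /\ forall y, K y -> d x y < r -> A y)).

Lemma metric_ball_relatively_open (c : X) (rho : R) : K c ->
  exists O, is_open X O /\ forall y, K y -> (O y <-> d c y < rho).
Proof.
  intros Kc.
  destruct (proj2 (d_topology (fun y => K y /\ d c y < rho) (fun y H => proj1 H)))
    as [O [HO HOA]].
  - intros x [Kx Hx]. exists (rho - d c x). split; [lra|].
    intros y Ky Hy. split; [easy|]. pose proof (d_triangle c x y Kc Kx Ky). lra.
  - exists O. split; [easy|]. intros y Ky. rewrite <- (HOA y Ky). tauto.
Qed.

Lemma relatively_open_contains_ball (O : X -> Prop) (x : X) :
  is_open X O -> K x -> O x -> exists r, 0 < r /\ forall y, K y -> d x y < r -> O y.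
Proof.
  intros HO Kx Ox.
  assert (HKO : exists U, is_open X U /\ forall y, K y -> (K y /\ O y <-> U y))
    by (exists O; split; [easy|tauto]).
  destruct (proj1 (d_topology _ (fun y H => proj1 H)) HKO x (conj Kx Ox)) as [r [r0 Hr]].
  exists r. split; [easy|]. intros y Ky Hy. now apply (Hr y Ky Hy).
Qed.

Lemma compact_metric_finite_net (rho : R) : 0 < rho ->
  exists L, (forall c, In c L -> K c) /\ forall y, K y -> exists c, In c L /\ d c y < rho.
Proof.
  intros rho0.
  destruct (compact_finite_witnesses X K K (fun c y => K y -> d c y < rho) K_compact)
    as [L [HL Hcov]].
  - intros x Kx. destruct (metric_ball_relatively_open x rho Kx) as [O [HO HOb]].
    exists x, O. repeat split; [easy|easy|apply HOb; auto; now rewrite d_self|].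
    intros y Oy Ky. now apply HOb.
  - exists L. split; [easy|]. intros y Ky.
    destruct (Hcov y Ky) as [c [Hc Hcy]]. exists c. auto.
Qed.

Lemma metric_subspace_base : exists B : nat * nat -> X -> Prop, subspace_base X K B.
Proof.
  destruct (choice (fun n L => (forall c, In c L -> K c) /\
              forall y, K y -> exists c, In c L /\ d c y < / (INR n + 1)))
    as [net Hnet].
  { intros n. apply compact_metric_finite_net, RinvN_pos. }
  exists (fun '(n, k) y => exists c, nth_error (net n) k = Some c /\ d c y < / (INR n + 1)).
  split.
  - intros [n k]. destruct (nth_error (net n) k) as [c|] eqn:Hc.
    + assert (Kc : K c) by (apply (proj1 (Hnet n)); eapply nth_error_In; eauto).
      destruct (metric_ball_relatively_open c (/ (INR n + 1)) Kc) as [O [HO HOb]].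
      exists O. split; [easy|]. intros y Ky. rewrite HOb by easy. split.
      * intros Hy. now exists c.
      * now intros [c' [[= <-] Hy]].
    + exists (fun _ => False). split; [apply open_empty|]. now intros y _; split; [|intros [c [[=] _]]].
  - intros O x HO Kx Ox.
    destruct (relatively_open_contains_ball O x HO Kx Ox) as [r [r0 Hr]].
    destruct (archimed_cor1 (r / 2)) as [n [Hn Hn0]]; [lra|].
    assert (Hrho : / (INR n + 1) < r / 2).
    { eapply Rlt_trans; [|exact Hn]. apply lt_0_INR in Hn0.
      apply Rinv_lt_contravar; [nra|lra]. }
    destruct (proj2 (Hnet n) x Kx) as [c [Hc Hcx]].
    assert (Kc : K c) by now apply (proj1 (Hnet n)).
    destruct (In_nth_error _ _ Hc) as [k Hk].
    exists (n, k). split; [now exists c|].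
    intros y Ky [c' [Hc' Hc'y]]. rewrite Hk in Hc'. injection Hc' as <-.
    apply Hr; [easy|]. pose proof (d_triangle x c y Kx Kc Ky).
    rewrite (d_sym x c Kx Kc) in *. lra.
Qed.

End MetricSubspace.

Lemma compact_metrizable_base (X : TopSpace) (K : X -> Prop) :
  compact_set X K -> metrizable_subspace X K ->
  exists B : nat * nat -> X -> Prop, subspace_base X K B.
Proof.
  intros HK [d [_ [dsep [dsym [dtri dtop]]]]].
  apply (metric_subspace_base X K d); auto.
  intros x Kx. now apply dsep.
Qed.

Definition sup_separable (X : TopSpace) (K : X -> Prop) : Prop :=
  forall eps, 0 < eps -> exists s : nat -> X -> R, (forall k, cont_real X (s k)) /\
    forall f, cont_real X f -> exists k, forall x, K x -> Rabs (f x - s k x) < eps.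

Lemma continuous_patch (X : TopSpace) (s : nat -> X -> R) :
  exists s' : nat -> X -> R, (forall k, cont_real X (s' k)) /\
    forall k, cont_real X (s k) -> s' k = s k.
Proof.
  exists (fun k => if excluded_middle_informative (cont_real X (s k)) then s k else fun _ => 0).
  split; intros k; destruct excluded_middle_informative; auto using cont_real_const; contradiction.
Qed.

Lemma exists_int_mult_near (r step : R) : 0 < step -> exists z : Z, Rabs (IZR z * step - r) < step.
Proof.
  intros Hstep. destruct (archimed (r / step)) as [H1 H2].
  exists (up (r / step) - 1)%Z. rewrite minus_IZR.
  replace ((IZR (up (r / step)) - 1) * step - r)
    with (step * ((IZR (up (r / step)) - 1) - r / step)) by (field; lra).
  rewrite Rabs_mult, Rabs_pos_eq by lra.
  assert (Rabs (IZR (up (r / step)) - 1 - r / step) < 1) by (apply Rabs_def1; lra).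
  nra.
Qed.

Section Codes.

Variables (X : TopSpace) (K : X -> Prop) (I : Type) (B : I -> X -> Prop) (step : R).
Hypothesis K_compact : compact_set X K.
Hypothesis B_base : subspace_base X K B.
Hypothesis step_pos : 0 < step.

Definition code_fits (g : X -> R) (code : list (I * Z)) : Prop :=
  forall i z, In (i, z) code -> forall y, K y -> B i y -> Rabs (g y - IZR z * step) < 2 * step.

Definition code_covers (code : list (I * Z)) : Prop :=
  forall y, K y -> exists i z, In (i, z) code /\ B i y.

Lemma cont_real_has_code (f : X -> R) : cont_real X f ->
  exists code, code_covers code /\ code_fits f code.
Proof.
  intros Hf.
  destruct (compact_finite_witnesses X K
              (fun '(i, z) => forall y, K y -> B i y -> Rabs (f y - IZR z * step) < 2 * step)
              (fun '(i, _) y => K y -> B i y) K_compact) as [code [Hfit Hcov]].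
  - intros x Kx.
    destruct (proj2 B_base (fun y => Rabs (f y - f x) < step) x) as [i [Bix HBi]];
      [now apply open_abs_sub_lt|easy|rewrite Rminus_diag, Rabs_R0; lra|].
    destruct (proj1 B_base i) as [O [HO HOB]].
    destruct (exists_int_mult_near (f x) step step_pos) as [z Hz].
    exists (i, z), O. repeat split; [|easy|now apply HOB|].
    + intros y Ky Biy. pose proof (HBi y Ky Biy).
      replace (f y - IZR z * step) with ((f y - f x) - (IZR z * step - f x)) by ring.
      eapply Rle_lt_trans; [apply Rabs_sub_le|lra].
    + intros y Oy Ky. now apply HOB.
  - exists code. split.
    + intros y Ky. destruct (Hcov y Ky) as [[i z] [Hin HB]]. exists i, z. auto.
    + intros i z Hin. exact (Hfit (i, z) Hin).
Qed.

Lemma code_fits_close (f g : X -> R) (code : list (I * Z)) :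
  code_covers code -> code_fits f code -> code_fits g code -> forall x, K x -> Rabs (f x - g x) < 4 * step.
Proof.
  intros Hcov Hf Hg x Kx. destruct (Hcov x Kx) as [i [z [Hin Bix]]].
  pose proof (Hf i z Hin x Kx Bix). pose proof (Hg i z Hin x Kx Bix).
  replace (f x - g x) with ((f x - IZR z * step) - (g x - IZR z * step)) by ring.
  eapply Rle_lt_trans; [apply Rabs_sub_le|lra].
Qed.

End Codes.

Lemma sup_separable_of_base (X : TopSpace) (K : X -> Prop) (I : Type) (B : I -> X -> Prop) :
  compact_set X K -> enumerable I -> subspace_base X K B -> sup_separable X K.
Proof.
  intros HK HI HB eps eps0. set (step := eps / 4).
  assert (step0 : 0 < step) by (unfold step; lra).
  destruct (enumerable_list _ (enumerable_prod _ _ HI enumerable_Z)) as [e He].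
  set (rep := fun code => epsilon (inhabits (fun _ : X => 0))
                (fun g => cont_real X g /\ code_fits X K I B step g code)).
  destruct (continuous_patch X (fun k => rep (e k))) as [s [Hs Hsrep]].
  exists s. split; [easy|]. intros f Hf.
  destruct (cont_real_has_code X K I B step HK HB step0 f Hf) as [code [Hcov Hfit]].
  destruct (He code) as [k <-].
  assert (Hrep : cont_real X (rep (e k)) /\ code_fits X K I B step (rep (e k)) (e k))
    by (apply epsilon_spec; eauto).
  exists k. rewrite Hsrep by apply Hrep. intros x Kx.
  pose proof (code_fits_close X K I B step f (rep (e k)) (e k) Hcov Hfit (proj2 Hrep) x Kx).
  unfold step in *. lra.
Qed.

Lemma ck_nbhd0_sup_ball (X : TopSpace) (K : X -> Prop) (c : R) :
  compact_set X K -> 0 < c -> ck_nbhd0 X (fun g => forall x, K x -> Rabs (g x) < c).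
Proof.
  intros HK c0.
  exists (fun g => exists e, 0 < e /\ forall x, K x -> Rabs (g x) < c - e).
  split; [|split].
  - intros f _ [e [e0 He]]. exists K, (e / 2). split; [easy|]. split; [lra|].
    intros g _ Hg. exists (e / 2). split; [lra|]. intros x Kx.
    specialize (Hg x Kx). specialize (He x Kx).
    pose proof (Rabs_triang (g x - f x) (f x)).
    replace (g x - f x + f x) with (g x) in * by ring. lra.
  - exists (c / 2). split; [lra|]. intros x _. rewrite Rabs_R0. lra.
  - intros g _ [e [e0 He]] x Kx. specialize (He x Kx). lra.
Qed.

Lemma aleph0_bounded_sup_separable (X : TopSpace) (K : X -> Prop) :
  aleph0_bounded_Ck X -> compact_set X K -> sup_separable X K.
Proof.
  intros Hb HK c c0.
  destruct (Hb _ (ck_nbhd0_sup_ball X K c HK c0)) as [A [[s Hs] [HAc Hdec]]].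
  destruct (continuous_patch X s) as [s' [Hs' Hs's]].
  exists s'. split; [easy|]. intros f Hf.
  destruct (Hdec f Hf) as [a [u [Aa [Uu [_ ->]]]]]. destruct (Hs a Aa) as [k <-].
  exists k. rewrite Hs's by now apply HAc. intros x Kx.
  replace (s k x + u x - s k x) with (u x) by ring. now apply Uu.
Qed.

Lemma sup_separable_aleph0_bounded (X : TopSpace) :
  (forall K, compact_set X K -> sup_separable X K) -> aleph0_bounded_Ck X.
Proof.
  intros HS U [W [HWo [HW0 HWU]]].
  destruct (HWo _ (cont_real_const X 0) HW0) as [K [eps [HK [eps0 HKW]]]].
  destruct (HS K HK eps eps0) as [s [Hs Hdense]].
  exists (fun a => exists k, a = s k). split; [|split].
  - exists s. intros a [k ->]. eauto.
  - intros a [k ->]. apply Hs.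
  - intros f Hf. destruct (Hdense f Hf) as [k Hk].
    assert (Hu : cont_real X (fun x => f x - s k x)) by (apply cont_real_sub; auto).
    exists (s k), (fun x => f x - s k x). split; [eauto|]. split; [|split; [easy|]].
    + apply HWU; [easy|]. apply HKW; [easy|]. intros x Kx. rewrite Rminus_0_r. auto.
    + apply functional_extensionality. intros x. ring.
Qed.

Lemma tychonoff_separating_function (X : TopSpace) (x y : X) :
  tychonoff X -> x <> y -> exists f, cont_real X f /\ f x = 1 /\ f y = 0.
Proof.
  intros [HT1 Hcr] Hxy.
  destruct (Hcr (fun z => z = x) y (HT1 x) (fun E => Hxy (eq_sym E)))
    as [f [Hf [_ [Hfy Hfx]]]].
  exists f. auto.
Qed.

Lemma metrizable_of_sup_separable (X : TopSpace) (K : X -> Prop) :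
  tychonoff X -> compact_set X K -> sup_separable X K -> metrizable_subspace X K.
Proof.
  intros HX HK HS.
  destruct (HS (/2) ltac:(lra)) as [s [Hs Hdense]].
  apply (metrizable_of_separating_family X K s HK Hs).
  intros x y Kx Ky Hxy.
  destruct (tychonoff_separating_function X x y HX Hxy) as [f [Hf [Hfx Hfy]]].
  destruct (Hdense f Hf) as [k Hk]. exists k. intros E.
  pose proof (Rabs_def2 _ _ (Hk x Kx)). pose proof (Rabs_def2 _ _ (Hk y Ky)).
  rewrite Hfx, E in *. rewrite Hfy in *. lra.
Qed.

Theorem theorem2p5 (X : TopSpace) (HX : tychonoff X) :
  aleph0_bounded_Ck X <->
  (forall K : X -> Prop, compact_set X K -> metrizable_subspace X K).
Proof.
  split.
  - intros Hb K HK.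
    apply metrizable_of_sup_separable; auto using aleph0_bounded_sup_separable.
  - intros Hmetr. apply sup_separable_aleph0_bounded. intros K HK.
    destruct (compact_metrizable_base X K HK (Hmetr K HK)) as [B HB].
    apply (sup_separable_of_base X K (nat * nat) B HK); auto.
    apply enumerable_prod; apply enumerable_nat.
Qed.
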